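(* Let $\mathcal E=\widetilde{\Omega^1_D}(\mathcal A)$ be the bimodule of one-forms of a spectral triple $(\mathcal A,\mathcal H,D)$. Then $\mathcal E$ satisfies Assumption III if and only if it satisfies Assumption III$'$.
   Context: $\mathcal E$ is the span in $B(\mathcal H)$ of $a[D,b]$; $\mathcal Z(\mathcal E)=\{e:ea=ae\ \forall a\in\mathcal A\}$, $\mathcal Z(\mathcal A)$ the center of $\mathcal A$. Assumption III: $\mathcal Z(\mathcal E)$ is finitely generated projective over $\mathcal Z(\mathcal A)$ and $\mathcal Z(\mathcal E)\otimes_{\mathcal Z(\mathcal A)}\mathcal A\to\mathcal E$, $e\otimes a\mapsto ea$, is a vector space isomorphism. Assumption III$'$: there exist a unital $*$-subalgebra $\mathcal A'\subseteq\mathcal Z(\mathcal A)$ and an $\mathcal A'$-submodule $\mathcal E'\subseteq\mathcal Z(\mathcal E)$, finitely generated projective over $\mathcal A'$, such that $\mathcal E'\otimes_{\mathcal A'}\mathcal A\to\mathcal E$, $e\otimes a\mapsto ea$, is a vector space isomorphism. *)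

From HB Require Import structures.
From mathcomp Require Import all_boot all_order all_algebra.
Set Implicit Arguments. Unset Strict Implicit. Unset Printing Implicit Defensive.
Import Order.TTheory GRing.Theory Num.Theory.
Local Open Scope ring_scope.

Section Defs.
Variables (C : numClosedFieldType) (B : algType C).

(* [star] is an involution making B a *-algebra (B plays B(H), star = adjoint) *)
Definition star_axioms (star : B -> B) : Prop :=
  [/\ forall x y, star (x + y) = star x + star y,
      forall (c : C) x, star (c *: x) = c^* *: star x,
      forall x y, star (x * y) = star y * star x
    & forall x, star (star x) = x].

Definition unital_star_subalg (star : B -> B) (S : B -> Prop) : Prop :=
  [/\ S 1,
      forall x y, S x -> S y -> S (x + y),
      forall (c : C) x, S x -> S (c *: x),
      forall x y, S x -> S y -> S (x * y)
    & forall x, S x -> S (star x)].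

(* Spectral triple data: A a unital *-subalgebra of B = B(H), and
   delta = [D, .] : A -> B, a linear derivation with [D,a^*] = -[D,a]^*. *)
Definition spectral_data (star : B -> B) (A : B -> Prop) (delta : B -> B) : Prop :=
  star_axioms star /\ unital_star_subalg star A /\
  [/\ forall a b, A a -> A b -> delta (a + b) = delta a + delta b,
      forall (c : C) a, A a -> delta (c *: a) = c *: delta a,
      forall a b, A a -> A b -> delta (a * b) = a * delta b + delta a * b
    & forall a, A a -> delta (star a) = - star (delta a)].

Definition one_forms (A : B -> Prop) (delta : B -> B) : B -> Prop :=
  fun x => exists n (c : 'I_n -> C) (a b : 'I_n -> B),
    (forall i, A (a i) /\ A (b i)) /\ x = \sum_(i < n) c i *: (a i * delta (b i)).

Definition centralizer_in (A E : B -> Prop) : B -> Prop :=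
  fun e => E e /\ forall a, A a -> e * a = a * e.

Definition center_of (A : B -> Prop) : B -> Prop := centralizer_in A A.

Definition submodule_over (R M : B -> Prop) : Prop :=
  [/\ M 0, forall x y, M x -> M y -> M (x + y)
    & forall x r, M x -> R r -> M (x * r)].

(* M is finitely generated projective over R: M is a direct summand
   (retract) of a free module R^n, i.e. there are R-linear maps
   s : M -> R^n (components s i) and p : R^n -> M, p(x) = sum_i g i * x i,
   with p o s = id_M. *)
Definition fg_projective (R M : B -> Prop) : Prop :=
  exists n (g : 'I_n -> B) (s : 'I_n -> B -> B),
    [/\ forall i, M (g i),
        forall i m, M m -> R (s i m),
        forall i m m', M m -> M m' -> s i (m + m') = s i m + s i m',
        forall i m r, M m -> R r -> s i (m * r) = s i m * r
      & forall m, M m -> m = \sum_(i < n) g i * s i m].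

(* The map M (x)_R N -> E, m (x) n |-> m n, is well defined and bijective.
   M (x)_R N is given by its defining universal property: the pair
   (E, (m,n) |-> m n) is a tensor product of M and N over R, i.e.
   E is spanned by the products m n, and every R-balanced biadditive map
   out of M x N factors through it via an additive map on E. *)
Definition tensor_mult_iso (R M N E : B -> Prop) : Prop :=
  [/\ forall m n, M m -> N n -> E (m * n),
      forall e, E e -> exists k (m n : 'I_k -> B),
        (forall i, M (m i) /\ N (n i)) /\ e = \sum_(i < k) m i * n i
    & forall (G : zmodType) (beta : B -> B -> G),
        (forall m m' n, M m -> M m' -> N n -> beta (m + m') n = beta m n + beta m' n) ->
        (forall m n n', M m -> N n -> N n' -> beta m (n + n') = beta m n + beta m n') ->
        (forall m r n, M m -> R r -> N n -> beta (m * r) n = beta m (r * n)) ->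
        exists f : B -> G,
          (forall x y, E x -> E y -> f (x + y) = f x + f y) /\
          (forall m n, M m -> N n -> f (m * n) = beta m n)].

Definition assumption_III (A E : B -> Prop) : Prop :=
  fg_projective (center_of A) (centralizer_in A E) /\
  tensor_mult_iso (center_of A) (centralizer_in A E) A E.

Definition assumption_III' (star : B -> B) (A E : B -> Prop) : Prop :=
  exists (A' E' : B -> Prop),
    unital_star_subalg star A' /\
    [/\ forall x, A' x -> center_of A x,
        submodule_over A' E', forall x, E' x -> centralizer_in A E x,
        fg_projective A' E'
      & tensor_mult_iso A' E' A E].

End Defs.

(* Only two features of the one-forms E matter: E contains 0 and is closed
   under addition, and A is a unital *-subalgebra, so that Z(A) is one too.
   III gives III' with A' := Z(A) and E' := Z(E).  Conversely, if E' is a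
   direct summand of A'^n (generators g_i, coordinates s_i) and
   E' (x)_{A'} A = E, the balanced map (m, a) |-> (s_i(m) a)_i factors through
   E and yields A-bilinear coordinates F_i : E -> A with e = sum_i g_i F_i(e).
   On Z(E) they take values in Z(A), so Z(E) is a direct summand of Z(A)^n;
   and a Z(A)-balanced map on Z(E) x A is determined, through this
   decomposition, by its restriction to E' x A, which factors through E by
   the universal property over A'. *)
From mathcomp Require Import all_boot all_order all_algebra.
Set Implicit Arguments. Unset Strict Implicit. Unset Printing Implicit Defensive.
Import GRing.Theory.
Local Open Scope ring_scope.

Section PredicateSums.
Variables (V G : zmodType) (P : V -> Prop).
Hypotheses (P0 : P 0) (PD : forall x y, P x -> P y -> P (x + y)).

Lemma sum_closed n (F : 'I_n -> V) :
  (forall i, P (F i)) -> P (\sum_(i < n) F i).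
Proof. by move=> PF; apply: big_ind => // i _; apply: PF. Qed.

Lemma additive_on_sum (h : V -> G) :
  (forall x y, P x -> P y -> h (x + y) = h x + h y) ->
  forall n (F : 'I_n -> V), (forall i, P (F i)) ->
  h (\sum_(i < n) F i) = \sum_(i < n) h (F i).
Proof.
move=> hD n F PF.
have h0 : h 0 = 0 by apply: (addrI (h 0)); rewrite -hD // !addr0.
suff : P (\sum_(i < n) F i) /\ h (\sum_(i < n) F i) = \sum_(i < n) h (F i).
  by case.
apply: (big_ind2 (fun x y => P x /\ h x = y)) => [|x1 u1 x2 u2 [Px1 <-] [Px2 <-]|i _].
- by split.
- by split; [apply: PD | apply: hD].
- by split.
Qed.

End PredicateSums.

Section OneForms.
Variables (C : numClosedFieldType) (B : algType C) (A : B -> Prop) (delta : B -> B).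

Lemma one_forms0 : one_forms A delta 0.
Proof.
by exists 0%N, (fun _ => 0), (fun _ => 0), (fun _ => 0); split; [case | rewrite big_ord0].
Qed.

Lemma one_formsD x y :
  one_forms A delta x -> one_forms A delta y -> one_forms A delta (x + y).
Proof.
move=> [n [c [a [b [Hab ->]]]]] [m [c' [a' [b' [Hab' ->]]]]].
pose glue T (u : 'I_n -> T) (v : 'I_m -> T) i :=
  match split i with inl j => u j | inr k => v k end.
exists (n + m)%N, (glue _ c c'), (glue _ a a'), (glue _ b b'); split.
  by move=> i; rewrite /glue; case: (split i).
rewrite big_split_ord /glue; congr (_ + _); apply: eq_bigr => i _.
  by rewrite (unsplitK (inl i)).
by rewrite (unsplitK (inr i)).
Qed.

End OneForms.

Section Centers.
Variables (C : numClosedFieldType) (B : algType C) (star : B -> B) (A E : B -> Prop).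

Lemma unital_star_subalg0 : unital_star_subalg star A -> A 0.
Proof. by move=> [A1 _ AZ _ _]; rewrite -(scale0r 1); apply: AZ. Qed.

Lemma center_unital_star_subalg :
  star_axioms star -> unital_star_subalg star A ->
  unital_star_subalg star (center_of A).
Proof.
move=> [_ _ stM stK] [A1 AD AZ AM Ast]; split.
- by split=> // a _; rewrite mul1r mulr1.
- move=> x y [Ax Hx] [Ay Hy]; split; first exact: AD.
  by move=> a Aa; rewrite mulrDl mulrDr Hx // Hy.
- move=> c x [Ax Hx]; split; first exact: AZ.
  by move=> a Aa; rewrite -scalerAl -scalerAr Hx.
- move=> x y [Ax Hx] [Ay Hy]; split; first exact: AM.
  by move=> a Aa; rewrite -mulrA Hy // mulrA Hx // mulrA.
- move=> x [Ax Hx]; split; first exact: Ast.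
  move=> a Aa; have := congr1 star (Hx (star a) (Ast _ Aa)).
  by rewrite !stM !stK => ->.
Qed.

Hypotheses (E0 : E 0) (ED : forall x y, E x -> E y -> E (x + y)).

Lemma centralizer0 : centralizer_in A E 0.
Proof. by split=> // a _; rewrite mul0r mulr0. Qed.

Lemma centralizerD x y :
  centralizer_in A E x -> centralizer_in A E y -> centralizer_in A E (x + y).
Proof.
move=> [Ex Hx] [Ey Hy]; split; first exact: ED.
by move=> a Aa; rewrite mulrDl mulrDr Hx // Hy.
Qed.

Lemma centralizer_mul_center x r :
  E (x * r) -> centralizer_in A E x -> center_of A r ->
  centralizer_in A E (x * r).
Proof.
move=> Exr [_ Hx] [_ Hr]; split=> // a Aa.
by rewrite -mulrA Hr // mulrA Hx // mulrA.
Qed.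

Lemma centralizer_submodule :
  (forall x r, centralizer_in A E x -> center_of A r -> E (x * r)) ->
  submodule_over (center_of A) (centralizer_in A E).
Proof.
move=> EM; split; [exact: centralizer0 | exact: centralizerD |].
by move=> x r Zx Zr; apply: centralizer_mul_center => //; apply: EM.
Qed.

End Centers.

Section CoordinateMaps.
Variables (C : numClosedFieldType) (B : algType C) (A E A' E' : B -> Prop).
Hypotheses (A0 : A 0) (AD : forall a b, A a -> A b -> A (a + b))
  (AM : forall a b, A a -> A b -> A (a * b)).
Hypotheses (E0 : E 0) (ED : forall x y, E x -> E y -> E (x + y)).
Hypotheses (A'Z : forall r, A' r -> center_of A r)
  (E'Z : forall m, E' m -> centralizer_in A E m).
Hypothesis tensorE : tensor_mult_iso A' E' A E.
Variables (n : nat) (g : 'I_n -> B) (s : 'I_n -> B -> B).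
Hypotheses (gE' : forall i, E' (g i)) (sA' : forall i m, E' m -> A' (s i m))
  (sD : forall i m m', E' m -> E' m' -> s i (m + m') = s i m + s i m')
  (sM : forall i m r, E' m -> A' r -> s i (m * r) = s i m * r)
  (s_reconstruct : forall m, E' m -> m = \sum_(i < n) g i * s i m).

Lemma tensor_mulr_closed e a : E e -> A a -> E (e * a).
Proof.
have [E'AE Espan _] := tensorE.
move=> /Espan [k [m [b [Hmb ->]]]] Aa; rewrite mulr_suml.
apply: (sum_closed E0 ED) => j; rewrite -mulrA.
by have [Em Ab] := Hmb j; apply: E'AE => //; apply: AM.
Qed.

Lemma coordinates_exist : exists F : B -> 'I_n -> B,
  (forall i x y, E x -> E y -> F (x + y) i = F x i + F y i) /\
  (forall i m a, E' m -> A a -> F (m * a) i = s i m * a).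
Proof.
have [_ _ Euniv] := tensorE.
pose beta m a := [ffun i => s i m * a].
have [|||f [fD fM]] := Euniv _ beta.
- by move=> m m' a Em Em' _; apply/ffunP => i; rewrite !ffunE sD // mulrDl.
- by move=> m a a' _ _ _; apply/ffunP => i; rewrite !ffunE mulrDr.
- by move=> m r a Em Ar _; apply/ffunP => i; rewrite !ffunE sM // mulrA.
exists (fun e i => f e i); split.
  by move=> i x y Ex Ey; rewrite fD // ffunE.
by move=> i m a Em Aa; rewrite fM // ffunE.
Qed.

Section Coordinates.
Variable F : B -> 'I_n -> B.
Hypotheses (FD : forall i x y, E x -> E y -> F (x + y) i = F x i + F y i)
  (F_tensor : forall i m a, E' m -> A a -> F (m * a) i = s i m * a).

Lemma coord_sum i k (m a : 'I_k -> B) : (forall j, E' (m j) /\ A (a j)) ->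
  F (\sum_(j < k) m j * a j) i = \sum_(j < k) s i (m j) * a j.
Proof.
have [E'AE _ _] := tensorE.
move=> Hma; rewrite (additive_on_sum E0 ED (FD i)); last first.
  by move=> j; have [] := Hma j; apply: E'AE.
by apply: eq_bigr => j _; have [] := Hma j; apply: F_tensor.
Qed.

Lemma coord_in_A e i : E e -> A (F e i).
Proof.
have [_ Espan _] := tensorE.
move=> /Espan [k [m [a [Hma ->]]]]; rewrite coord_sum //.
apply: (sum_closed A0 AD) => j; have [Em Aa] := Hma j.
by apply: AM => //; have [] := A'Z (sA' i Em).
Qed.

Lemma coord_mulr e a i : E e -> A a -> F (e * a) i = F e i * a.
Proof.
have [_ Espan _] := tensorE.
move=> /Espan [k [m [b [Hmb ->]]]] Aa; rewrite mulr_suml.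
under eq_bigr do rewrite -mulrA.
have Hmba j : E' (m j) /\ A (b j * a).
  by have [Em Ab] := Hmb j; split=> //; apply: AM.
rewrite !coord_sum // mulr_suml.
by apply: eq_bigr => j _; rewrite mulrA.
Qed.

Lemma coord_mull e a i : E e -> A a -> F (a * e) i = a * F e i.
Proof.
have [_ Espan _] := tensorE.
move=> /Espan [k [m [b [Hmb ->]]]] Aa; rewrite mulr_sumr.
have -> : \sum_(j < k) a * (m j * b j) = \sum_(j < k) m j * (a * b j).
  apply: eq_bigr => j _; have [Em _] := Hmb j; have [_ Hm] := E'Z Em.
  by rewrite mulrA -Hm // mulrA.
have Hmab j : E' (m j) /\ A (a * b j).
  by have [Em Ab] := Hmb j; split=> //; apply: AM.
rewrite !coord_sum // mulr_sumr; apply: eq_bigr => j _.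
have [Em _] := Hmb j; have [_ Hs] := A'Z (sA' i Em).
by rewrite !mulrA Hs.
Qed.

Lemma coord_center e i : centralizer_in A E e -> center_of A (F e i).
Proof.
move=> [Ee He]; split; first exact: coord_in_A.
by move=> a Aa; rewrite -coord_mulr // -coord_mull // He.
Qed.

Lemma coord_reconstruct e : E e -> e = \sum_(i < n) g i * F e i.
Proof.
have [_ Espan _] := tensorE.
move=> /Espan [k [m [b [Hmb ->]]]].
under [RHS]eq_bigr do rewrite coord_sum // mulr_sumr.
rewrite exchange_big /=; apply: eq_bigr => j _.
have [Em _] := Hmb j; rewrite {1}(s_reconstruct Em) mulr_suml.
by apply: eq_bigr => i _; rewrite mulrA.
Qed.

Lemma center_fg_projective : fg_projective (center_of A) (centralizer_in A E).
Proof.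
exists n, g, (fun i e => F e i); split.
- by move=> i; apply: E'Z.
- by move=> i m Zm; apply: coord_center.
- by move=> i m m' [Em _] [Em' _]; apply: FD.
- by move=> i m r [Em _] [Ar _]; apply: coord_mulr.
- by move=> m [Em _]; apply: coord_reconstruct.
Qed.

Lemma center_tensor_mult_iso :
  tensor_mult_iso (center_of A) (centralizer_in A E) A E.
Proof.
have [E'AE Espan Euniv] := tensorE.
split.
- by move=> m a [Em _] Aa; apply: tensor_mulr_closed.
- move=> e /Espan [k [m [a [Hma ->]]]]; exists k, m, a; split=> //.
  by move=> j; have [Em Aa] := Hma j; split=> //; apply: E'Z.
move=> G beta bD1 bD2 bM.
have [|||h [hD hM]] := Euniv G beta.
- by move=> m m' a Em Em' Aa; apply: bD1 => //; apply: E'Z.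
- by move=> m a a' Em Aa Aa'; apply: bD2 => //; apply: E'Z.
- by move=> m r a Em Ar Aa; apply: bM => //; [apply: E'Z | apply: A'Z].
exists h; split=> // m a Zm Aa; have [Em _] := Zm.
have gFZ i : centralizer_in A E (g i * F m i).
  apply: centralizer_mul_center; [|exact: E'Z|exact: coord_center].
  by apply: E'AE => //; apply: coord_in_A.
rewrite {1 2}(coord_reconstruct Em) mulr_suml.
rewrite (additive_on_sum (centralizer0 A E0) (centralizerD ED)
  (h := fun x => beta x a)) //; last by move=> x y Zx Zy; apply: bD1.
rewrite (additive_on_sum E0 ED hD); last first.
  by move=> i; have [Ei _] := gFZ i; apply: tensor_mulr_closed.
apply: eq_bigr => i _.
rewrite bM //; [|exact: E'Z|exact: coord_center].
by rewrite -mulrA hM //; apply: AM => //; apply: coord_in_A.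
Qed.

End Coordinates.

Lemma assumption_III_of_coordinates : assumption_III A E.
Proof.
have [F [FD F_tensor]] := coordinates_exist.
split; [exact: (center_fg_projective FD F_tensor) |
        exact: (center_tensor_mult_iso FD F_tensor)].
Qed.

End CoordinateMaps.

Section Equivalence.
Variables (C : numClosedFieldType) (B : algType C) (star : B -> B) (A E : B -> Prop).
Hypotheses (star_inv : star_axioms star) (A_subalg : unital_star_subalg star A).
Hypotheses (E0 : E 0) (ED : forall x y, E x -> E y -> E (x + y)).

Lemma assumption_III'_of_III : assumption_III A E -> assumption_III' star A E.
Proof.
move=> [fgZ tensorZ]; have [E'AE _ _] := tensorZ.
exists (center_of A), (centralizer_in A E); split.
  exact: center_unital_star_subalg.
split=> //; apply: centralizer_submodule => // x r Zx [Ar _].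
exact: E'AE.
Qed.

Lemma assumption_III_of_III' : assumption_III' star A E -> assumption_III A E.
Proof.
move=> [A' [E' [_ [A'Z _ E'Z [n [g [s [gE' sA' sD sM s_rec]]]] tensorE]]]].
have [_ AD _ AM _] := A_subalg.
exact: (assumption_III_of_coordinates (unital_star_subalg0 A_subalg) AD AM
  E0 ED A'Z E'Z tensorE gE' sA' sD sM s_rec).
Qed.

End Equivalence.

Theorem proposition4p17 (C : numClosedFieldType) (B : algType C)
  (star : B -> B) (A : B -> Prop) (delta : B -> B) :
  spectral_data star A delta ->
  (assumption_III A (one_forms A delta) <->
   assumption_III' star A (one_forms A delta)).
Proof.
move=> [star_inv [A_subalg _]].
have E0 := one_forms0 A delta; have ED := @one_formsD C B A delta.
split; [exact: assumption_III'_of_III | exact: assumption_III_of_III'].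
Qed.
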